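(* Let $p$ be an odd prime. Then $$\sum_{k=0}^{\frac{p-1}2}\frac{k^2\binom{2k}k^2}{32^k}\equiv\begin{cases}(-1)^{\frac{p+3}4}2^{-\frac{p-1}2}\dfrac{(\frac{p+3}2)!}{(\frac{p-5}4)!\,(\frac{p+3}4)!}\pmod{p^2}&\text{if }p\equiv1\pmod 4,\\ (-1)^{\frac{p+1}4}2^{-\frac{p-1}2}\dfrac{(\frac{p+1}2)!}{(\frac{p-3}4)!\,(\frac{p+1}4)!}\pmod{p^2}&\text{if }p\equiv3\pmod4.\end{cases}$$
   Context: Congruences are between rational numbers whose denominators are prime to $p$. *)

From HB Require Import structures.
From mathcomp Require Import all_boot all_order all_algebra.
Set Implicit Arguments. Unset Strict Implicit. Unset Printing Implicit Defensive.
Import Order.TTheory GRing.Theory Num.Theory.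
Local Open Scope ring_scope.

Definition p_integral (p : nat) (r : rat) : bool := coprime p `|denq r|%N.

(* a = b (mod m) for rationals whose denominators are prime to p:
   (a - b) / m is p-integral. *)
Definition rat_cong (p : nat) (m : nat) (a b : rat) : Prop :=
  p_integral p ((a - b) / m%:R).

From HB Require Import structures.
From mathcomp Require Import all_boot all_order all_algebra.
From mathcomp Require Import ring zify.
Import Order.TTheory GRing.Theory Num.Theory.
Set Implicit Arguments. Unset Strict Implicit. Unset Printing Implicit Defensive.
Local Open Scope ring_scope.

(* With p = 2n + 1 one has (n - j)(n + 1 + j) = (p^2 - (2j + 1)^2) / 4, so for
   k <= n the product (-1)^k C(n, k) C(n + k, k) agrees modulo p^2 with
   C(2k, k)^2 / 16^k; the sum is therefore congruent to
   sum_k k^2 (-1/2)^k C(n, k) C(n + k, k).  Since sum_k C(n, k) C(n + k, k) t^k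
   is the Legendre polynomial P_n(1 + 2t), Bonnet's recursion gives a
   three-term recurrence in n for such weighted sums; for the weights
   k^i (-1/2)^k with i <= 2 these recurrences are coupled and solve in
   closed form in terms of P_2m(0) = (-1)^m C(2m, m) / 4^m, which yields the
   factorial expressions of the statement. *)

Lemma natS_neq0 {R : numDomainType} n : (n.+1)%:R != 0 :> R.
Proof. by rewrite pnatr_eq0. Qed.

Ltac natr_neq0 :=
  repeat (apply/andP; split);
  rewrite ?expf_neq0 // -?natrM -?natrD ?natr1 ?nat1r -?natrM -?natrD pnatr_eq0; lia.

Lemma mul_central_bin k :
  (k.+1 * 'C(2 * k.+1, k.+1) = 2 * (2 * k).+1 * 'C(2 * k, k))%N.
Proof.
have e1 := mul_bin_diag (2 * k).+2 k.
have e2 := mul_bin_diag (2 * k).+1 k.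
have e3 := mul_bin_left (2 * k).+1 k.
rewrite (_ : (2 * k).+1 - k = k.+1)%N // in e3; last by lia.
move/eqP: e3; rewrite eqn_pmul2l // => /eqP e3.
rewrite mulnS -e1 /= -mulnA e2 e3; lia.
Qed.

Section Legendre.
Variable R : numFieldType.

(* [legendre_coef x k] is C(x, k) C(x + k, k), the coefficient of t^k in
   P_x(1 + 2t) when x is a natural number. *)
Definition legendre_coef (x : R) (k : nat) : R :=
  \prod_(j < k) ((x - j%:R) * (x + 1 + j%:R) / (j.+1)%:R ^+ 2).

Lemma legendre_coef0 x : legendre_coef x 0 = 1.
Proof. by rewrite /legendre_coef big_ord0. Qed.

Lemma legendre_coefS x k : legendre_coef x k.+1 =
  legendre_coef x k * ((x - k%:R) * (x + 1 + k%:R) / (k.+1)%:R ^+ 2).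
Proof. by rewrite /legendre_coef big_ord_recr. Qed.

Lemma legendre_coef_shift x k :
  legendre_coef (x + 1) k * (x + 1 - k%:R) = legendre_coef x k * (x + 1 + k%:R).
Proof.
elim: k => [|k IH]; first by rewrite !legendre_coef0; ring.
rewrite !legendre_coefS.
transitivity ((legendre_coef (x + 1) k * (x + 1 - k%:R)) *
  ((x + 2 + k%:R) * (x - k%:R) / (k.+1)%:R ^+ 2)); first by rewrite -natr1; ring.
rewrite IH -natr1; ring.
Qed.

Lemma legendre_coef_addr1 x k : legendre_coef (x + 1) k.+1 =
  legendre_coef x k * ((x + 1 + k%:R) * (x + 2 + k%:R) / (k.+1)%:R ^+ 2).
Proof.
rewrite legendre_coefS.
transitivity ((legendre_coef (x + 1) k * (x + 1 - k%:R)) *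
  ((x + 2 + k%:R) / (k.+1)%:R ^+ 2)); first ring.
by rewrite legendre_coef_shift; ring.
Qed.

Lemma legendre_coef_subr1 x k : legendre_coef (x - 1) k.+1 =
  legendre_coef x k * ((x - k%:R) * (x - 1 - k%:R) / (k.+1)%:R ^+ 2).
Proof.
have shift := legendre_coef_shift (x - 1) k; rewrite subrK in shift.
rewrite legendre_coefS.
transitivity ((legendre_coef (x - 1) k * (x + k%:R)) *
  ((x - 1 - k%:R) / (k.+1)%:R ^+ 2)); first ring.
by rewrite -shift; ring.
Qed.

(* The three-term recurrence behind Bonnet's recursion for Legendre polynomials. *)
Lemma legendre_coef_rec x k :
  (x + 1) * legendre_coef (x + 1) k.+1 =
  (2 * x + 1) * (legendre_coef x k.+1 + 2 * legendre_coef x k)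
  - x * legendre_coef (x - 1) k.+1.
Proof.
rewrite legendre_coef_addr1 legendre_coef_subr1 legendre_coefS.
by field; natr_neq0.
Qed.

Lemma legendre_coef_nat_eq0 (n k : nat) : (n < k)%N -> legendre_coef n%:R k = 0.
Proof.
case: k => // k; rewrite ltnS => /subnKC <-.
elim: (k - n)%N => [|i IH]; first by rewrite addn0 legendre_coefS subrr !mul0r mulr0.
by rewrite addnS legendre_coefS IH !mul0r.
Qed.

Lemma legendre_coef_sum_rec (w : nat -> R) x N :
  \sum_(k < N.+1) w k * ((x + 1) * legendre_coef (x + 1) k
       - (2 * x + 1) * legendre_coef x k + x * legendre_coef (x - 1) k)
  = 2 * (2 * x + 1) * \sum_(k < N) w k.+1 * legendre_coef x k.
Proof.
rewrite big_ord_recl !legendre_coef0 mulr_sumr.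
rewrite (_ : _ - _ + _ = 0); last by ring.
rewrite mulr0 add0r; apply: eq_bigr => k _.
by rewrite legendre_coef_rec; ring.
Qed.

Definition legendre_sum (w : nat -> R) (n : nat) : R :=
  \sum_(k < n.+1) w k * legendre_coef n%:R k.

Lemma legendre_sum_widen (w : nat -> R) n N : (n < N)%N ->
  \sum_(k < N) w k * legendre_coef n%:R k = legendre_sum w n.
Proof.
move=> /subnKC <-; rewrite big_split_ord /= [X in _ + X]big1 ?addr0 // => k _.
by rewrite legendre_coef_nat_eq0 ?mulr0 //= ltnS leq_addr.
Qed.

Lemma legendre_sum_rec (w : nat -> R) m :
  (m.+2)%:R * legendre_sum w m.+2 - ((2 * m).+3)%:R * legendre_sum w m.+1
  + (m.+1)%:R * legendre_sum w m
  = 2 * ((2 * m).+3)%:R * legendre_sum (fun k => w k.+1) m.+1.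
Proof.
have -> : ((2 * m).+3)%:R = 2 * (m.+1)%:R + 1 :> R.
  by rewrite -!natr1 natrM; ring.
rewrite -(@legendre_sum_widen (fun k => w k.+1) m.+1 m.+3) // -legendre_coef_sum_rec.
rewrite -!(@legendre_sum_widen w _ m.+4); try lia.
rewrite !mulr_sumr -sumrB -big_split natr1 -[(m.+1)%:R]natr1 addrK natr1.
by apply: eq_bigr => k _ /=; ring.
Qed.

Lemma eq_legendre_sum (w v : nat -> R) n :
  w =1 v -> legendre_sum w n = legendre_sum v n.
Proof. by move=> wv; apply: eq_bigr => k _; rewrite wv. Qed.

Lemma legendre_sum_lin (w v : nat -> R) a b n :
  legendre_sum (fun k => a * w k + b * v k) n =
  a * legendre_sum w n + b * legendre_sum v n.
Proof. by rewrite /legendre_sum !mulr_sumr -big_split; apply: eq_bigr => k _ /=; ring. Qed.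

Lemma legendre_sum0 (w : nat -> R) : legendre_sum w 0 = w 0.
Proof. by rewrite /legendre_sum big_ord1 legendre_coef0 mulr1. Qed.

Lemma legendre_sum1 (w : nat -> R) : legendre_sum w 1 = w 0 + 2 * w 1.
Proof.
rewrite /legendre_sum !big_ord_recr big_ord0 /= legendre_coefS !legendre_coef0.
by field.
Qed.

Lemma legendre_sum_half_rec (w v : nat -> R) m :
  (forall k, w k.+1 = - 2^-1 * (w k + v k)) ->
  (m.+2)%:R * legendre_sum w m.+2 =
  - ((2 * m).+3)%:R * legendre_sum v m.+1 - (m.+1)%:R * legendre_sum w m.
Proof.
move=> wS; have := legendre_sum_rec w m.
have wS' : (fun k => w k.+1) =1 (fun k => - 2^-1 * w k + - 2^-1 * v k).
  by move=> k; rewrite wS mulrDr.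
rewrite (eq_legendre_sum _ wS') legendre_sum_lin.
move/eqP; rewrite -subr_eq0 => /eqP e.
apply/eqP; rewrite -subr_eq0 -[X in _ == X]e.
by apply/eqP; field.
Qed.

Definition half_moment (i n : nat) : R :=
  legendre_sum (fun k => k%:R ^+ i * (- 2^-1) ^+ k) n.

Lemma half_moment_0 i : half_moment i 0 = (i == 0)%:R.
Proof. by rewrite /half_moment legendre_sum0 expr0 mulr1 mulr0n expr0n. Qed.

Lemma half_moment_1 i : half_moment i 1 = (i == 0)%:R - 1.
Proof. by rewrite /half_moment legendre_sum1 expr1n expr0 expr1 mulr0n expr0n; field. Qed.

Lemma half_moment0_rec m :
  (m.+2)%:R * half_moment 0 m.+2 = - (m.+1)%:R * half_moment 0 m.
Proof.
rewrite /half_moment (@legendre_sum_half_rec _ (fun=> 0)) => [|k]; last first.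
  by rewrite /= exprS; ring.
by rewrite /legendre_sum big1 ?mulr0 ?sub0r ?mulNr // => k _; rewrite mul0r.
Qed.

Lemma half_moment1_rec m : (m.+2)%:R * half_moment 1 m.+2 =
  - ((2 * m).+3)%:R * half_moment 0 m.+1 - (m.+1)%:R * half_moment 1 m.
Proof.
apply: legendre_sum_half_rec => k /=; rewrite (exprS (- 2^-1)) -natr1; ring.
Qed.

Lemma half_moment2_rec m : (m.+2)%:R * half_moment 2 m.+2 =
  - ((2 * m).+3)%:R * (2 * half_moment 1 m.+1 + 1 * half_moment 0 m.+1)
  - (m.+1)%:R * half_moment 2 m.
Proof.
rewrite /half_moment -legendre_sum_lin.
apply: legendre_sum_half_rec => k /=; rewrite (exprS (- 2^-1)) -natr1; ring.
Qed.

Lemma bin_central_succ k : 'C(2 * k.+1, k.+1)%:R =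
  2 * ((2 * k).+1)%:R * 'C(2 * k, k)%:R / (k.+1)%:R :> R.
Proof. by rewrite -!natrM -mul_central_bin natrM; field; natr_neq0. Qed.

Definition central (m : nat) : R := (-1) ^+ m * 'C(2 * m, m)%:R / 4 ^+ m.

Lemma central_succ m :
  central m.+1 = - ((2 * m).+1)%:R / ((2 * m).+2)%:R * central m.
Proof. by rewrite /central bin_central_succ !exprS; field; natr_neq0. Qed.

Lemma half_moment0_odd m : half_moment 0 (2 * m).+1 = 0.
Proof.
elim: m => [|m IH]; first by rewrite half_moment_1 subrr.
apply: (mulfI (natS_neq0 (2 * m).+2)).
by rewrite mulnS half_moment0_rec IH !mulr0.
Qed.

Lemma half_moment0_even m : half_moment 0 (2 * m) = central m.
Proof.
elim: m => [|m IH]; first by rewrite half_moment_0 /central !expr0 bin0 divr1 mul1r.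
apply: (mulfI (natS_neq0 (2 * m).+1)).
rewrite mulnS half_moment0_rec IH central_succ; field; natr_neq0.
Qed.

Lemma half_moment1_even m : half_moment 1 (2 * m) = 0.
Proof.
elim: m => [|m IH]; first by rewrite half_moment_0.
apply: (mulfI (natS_neq0 (2 * m).+1)).
by rewrite mulnS half_moment1_rec half_moment0_odd IH !mulr0 subrr.
Qed.

Lemma half_moment1_odd m :
  half_moment 1 (2 * m).+1 = - ((2 * m).+1)%:R * central m.
Proof.
elim: m => [|m IH]; first by rewrite half_moment_1 /central !expr0 bin0 /=; field.
apply: (mulfI (natS_neq0 (2 * m).+2)).
have := half_moment0_even m.+1; rewrite mulnS => even0.
by rewrite half_moment1_rec IH even0 central_succ; field; natr_neq0.
Qed.

Lemma half_moment2_even m :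
  half_moment 2 (2 * m) = - (2 * m)%:R * ((2 * m).+1)%:R * central m.
Proof.
elim: m => [|m IH]; first by rewrite half_moment_0 muln0 mulr0n oppr0 !mul0r.
apply: (mulfI (natS_neq0 (2 * m).+1)).
rewrite mulnS half_moment2_rec IH half_moment1_odd half_moment0_odd central_succ.
field; natr_neq0.
Qed.

Lemma half_moment2_odd m :
  half_moment 2 (2 * m).+1 = - ((2 * m).+1)%:R * central m.
Proof.
elim: m => [|m IH]; first by rewrite half_moment_1 /central !expr0 bin0 /=; field.
apply: (mulfI (natS_neq0 (2 * m).+2)).
have := half_moment0_even m.+1; rewrite mulnS => even0.
have := half_moment1_even m.+1; rewrite mulnS => even1.
by rewrite half_moment2_rec IH even1 even0 central_succ; field; natr_neq0.
Qed.

Lemma bin_central_fact m :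
  'C(2 * m, m)%:R = (2 * m)`!%:R / (m`! * m`!)%:R :> R.
Proof.
have := bin_fact (leq_addl m m); rewrite addnK addnn -mul2n => <-.
by rewrite natrM mulfK // pnatr_eq0 -lt0n muln_gt0 fact_gt0.
Qed.

Lemma half_moment2_even_fact m : half_moment 2 (2 * m.+1) =
  (-1) ^+ m.+2 / 2%:R ^+ (2 * m.+1) * ((2 * m.+1).+2`!%:R / (m`! * m.+2`!)%N%:R).
Proof.
have := fact_gt0 m.
rewrite half_moment2_even /central bin_central_fact mulnS !factS exprD exprM !natrM.
rewrite (_ : 2 ^+ 2 = 4 :> R); last by rewrite expr2 -natrM.
by move=> fact_m_gt0; rewrite !exprS; field; natr_neq0.
Qed.

Lemma half_moment2_odd_fact m : half_moment 2 (2 * m).+1 =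
  (-1) ^+ m.+1 / 2%:R ^+ (2 * m).+1 * ((2 * m).+2`!%:R / (m`! * m.+1`!)%N%:R).
Proof.
have := fact_gt0 m.
rewrite half_moment2_odd /central bin_central_fact !factS (exprS 2) exprM !natrM.
rewrite (_ : 2 ^+ 2 = 4 :> R); last by rewrite expr2 -natrM.
by move=> fact_m_gt0; rewrite !exprS; field; natr_neq0.
Qed.

End Legendre.

Arguments half_moment {R}.
Arguments central {R}.

Lemma p_integral_frac p (n d : int) :
  coprime p `|d|%N -> p_integral p (n%:~R / d%:~R).
Proof.
rewrite /p_integral; case: (divqP n d) => [_|k x _].
  by rewrite (denq_int 0) coprimen1.
by rewrite abszM coprimeMr => /andP[].
Qed.

Lemma p_integral_subring_closed p : GRing.subring_closed (p_integral p).
Proof.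
split; first by rewrite unfold_in /p_integral (denq_int 1) coprimen1.
- move=> x y hx hy; rewrite -[x]divq_num_den -[y]divq_num_den.
  have -> : (numq x)%:~R / (denq x)%:~R - (numq y)%:~R / (denq y)%:~R =
    (numq x * denq y - numq y * denq x)%:~R / (denq x * denq y)%:~R :> rat.
    by rewrite rmorphB !rmorphM /=; field; rewrite !intr_eq0 !denq_eq0.
  by apply: p_integral_frac; rewrite abszM coprimeMr; apply/andP.
- move=> x y hx hy; rewrite -[x]divq_num_den -[y]divq_num_den.
  have -> : (numq x)%:~R / (denq x)%:~R * ((numq y)%:~R / (denq y)%:~R) =
    (numq x * numq y)%:~R / (denq x * denq y)%:~R :> rat.
    by rewrite !rmorphM /= invfM; ring.
  by apply: p_integral_frac; rewrite abszM coprimeMr; apply/andP.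
Qed.

HB.instance Definition _ p :=
  GRing.isSubringClosed.Build rat (p_integral p) (p_integral_subring_closed p).

Lemma p_integral_invn p d : coprime p d -> d%:R^-1 \in p_integral p.
Proof. by move=> pd; have := @p_integral_frac p 1 d pd; rewrite pmulrn mul1r. Qed.

Lemma p_integral_legendre_coef p n k : prime p -> (k < p)%N ->
  legendre_coef n%:R k \in p_integral p.
Proof.
move=> p_pr kp; apply: rpred_prod => j _.
rewrite -natrX; apply: rpredM; first by rewrite rpredM ?rpredB ?rpredD ?rpred1 ?rpred_nat.
apply: p_integral_invn; rewrite coprimeXr // prime_coprime // gtnNdvd //.
exact: leq_ltn_trans (ltn_ord j) kp.
Qed.

(* Each step multiplies C(2k, k)^2 / 16^k by t := (2k + 1)^2 / (4 (k + 1)^2) and,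
   because (n - k)(n + 1 + k) = (p^2 - (2k + 1)^2) / 4, multiplies
   (-1)^k legendre_coef n k by t - p^2 / (4 (k + 1)^2). *)
Lemma sqr_central_bin_cong p n k : prime p -> p = (2 * n).+1 -> (k <= n)%N ->
  rat_cong p (p ^ 2) ('C(2 * k, k)%:R ^+ 2 / 16 ^+ k)
                     ((-1) ^+ k * legendre_coef n%:R k).
Proof.
move=> p_pr pE; elim: k => [|k IH] kn.
  by rewrite /rat_cong bin0 !expr0 legendre_coef0 divr1 expr1n subrr mul0r; apply: rpred0.
have {IH} := IH (ltnW kn); rewrite /rat_cong; set q := (_ - _) / _ => q_int.
set d := (4 * k.+1 ^ 2)%N.
have cop_d : coprime p d.
  rewrite /d (_ : 4 = 2 ^ 2)%N // coprimeMr !coprimeXr // !prime_coprime //;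
    by rewrite gtnNdvd //; lia.
have -> : ('C(2 * k.+1, k.+1)%:R ^+ 2 / 16 ^+ k.+1
             - (-1) ^+ k.+1 * legendre_coef n%:R k.+1) / (p ^ 2)%:R
          = ((2 * k).+1 ^ 2)%:R * d%:R^-1 * q
            + (-1) ^+ k * legendre_coef n%:R k * d%:R^-1 :> rat.
  rewrite /q /d bin_central_succ legendre_coefS pE !natrX natrM natrX !exprS.
  by field; natr_neq0.
apply: rpredD.
  by apply: rpredM => //; rewrite rpredM ?rpred_nat ?p_integral_invn.
rewrite rpredM ?p_integral_invn // rpredM ?rpredX ?rpredN ?rpred1 //.
by apply: p_integral_legendre_coef; lia.
Qed.

Lemma half_moment2_cong p n : prime p -> p = (2 * n).+1 ->
  rat_cong p (p ^ 2)
    (\sum_(0 <= k < n.+1) ((k ^ 2 * 'C(2 * k, k) ^ 2)%N%:R / 32%:R ^+ k))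
    (half_moment 2 n).
Proof.
move=> p_pr pE; have p_gt1 := prime_gt1 p_pr.
rewrite /rat_cong big_mkord /half_moment /legendre_sum -sumrB mulr_suml.
apply: rpred_sum => k _.
have kn : (k <= n)%N by rewrite -ltnS.
have := sqr_central_bin_cong p_pr pE kn; rewrite /rat_cong => cong.
have p_neq0 : p%:R != 0 :> rat by rewrite pnatr_eq0; lia.
have -> : ((k ^ 2 * 'C(2 * k, k) ^ 2)%N%:R / 32%:R ^+ k
           - k%:R ^+ 2 * (- 2^-1) ^+ k * legendre_coef n%:R k) / (p ^ 2)%:R
        = (k ^ 2)%:R * (2 ^ k)%:R^-1 *
          (('C(2 * k, k)%:R ^+ 2 / 16 ^+ k - (-1) ^+ k * legendre_coef n%:R k)
           / (p ^ 2)%:R) :> rat.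
  rewrite !natrM !natrX (_ : 32%:R = 16 * 2 :> rat) // exprMn (exprNn (2^-1)) exprVn.
  by field; rewrite p_neq0 !expf_neq0.
rewrite rpredM // rpredM ?rpred_nat // p_integral_invn // coprimeXr //.
by rewrite prime_coprime // gtnNdvd //; lia.
Qed.

Theorem corollary2p1 (p : nat) (hp : prime p) (hodd : odd p) :
  let S : rat := \sum_(0 <= k < ((p - 1) %/ 2).+1)
      ((k ^ 2 * 'C(2 * k, k) ^ 2)%N%:R / (32%:R ^+ k)) in
  ((p %% 4 = 1)%N ->
     rat_cong p (p ^ 2) S
       ((-1) ^+ ((p + 3) %/ 4) / (2%:R ^+ ((p - 1) %/ 2))
        * ((((p + 3) %/ 2)`!)%:R / ((((p - 5) %/ 4)`! * ((p + 3) %/ 4)`!)%N%:R))))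
  /\
  ((p %% 4 = 3)%N ->
     rat_cong p (p ^ 2) S
       ((-1) ^+ ((p + 1) %/ 4) / (2%:R ^+ ((p - 1) %/ 2))
        * ((((p + 1) %/ 2)`!)%:R / ((((p - 3) %/ 4)`! * ((p + 1) %/ 4)`!)%N%:R)))).
Proof.
move=> S; have p_gt1 := prime_gt1 hp; split => p_mod4.
- have [m pE] : exists m, p = (4 * m.+1).+1 by exists (p %/ 4).-1%N; lia.
  have -> : ((p + 3) %/ 4 = m.+2)%N by lia.
  have -> : ((p + 3) %/ 2 = (2 * m.+1).+2)%N by lia.
  have -> : ((p - 5) %/ 4 = m)%N by lia.
  rewrite /S (_ : (p - 1) %/ 2 = 2 * m.+1)%N -?half_moment2_even_fact; last by lia.
  by apply: half_moment2_cong hp _; lia.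
- have [m pE] : exists m, p = (4 * m).+3 by exists (p %/ 4)%N; lia.
  have -> : ((p + 1) %/ 4 = m.+1)%N by lia.
  have -> : ((p + 1) %/ 2 = (2 * m).+2)%N by lia.
  have -> : ((p - 3) %/ 4 = m)%N by lia.
  rewrite /S (_ : (p - 1) %/ 2 = (2 * m).+1)%N -?half_moment2_odd_fact; last by lia.
  by apply: half_moment2_cong hp _; lia.
Qed.
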